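(* Let $S \subseteq \mathbb{R}^n$ be nonempty, closed and convex, let $F = (F_1,\dots,F_m)^\top \colon S \to \mathbb{R}^m$ with each $F_i$ convex (and continuous), let $\ell > 0$, and define \[ u_\ell(x) := \max_{y \in S} \min_{i = 1,\dots,m} \left\{F_i(x) - F_i(y) - \frac{\ell}{2}\|x - y\|^2\right\}, \quad x \in S. \] Then $u_\ell(x) \ge 0$ for all $x \in S$. Moreover, $x \in S$ is weakly Pareto optimal for $\min_{x\in S} F(x)$ if and only if $u_\ell(x) = 0$.
   Context: $\|\cdot\|$ is the Euclidean norm. For $u,v\in\mathbb{R}^m$, $u<v$ means $u_i<v_i$ for all $i$. A point $x^\ast \in S$ is weakly Pareto optimal for $\min_{x\in S} F(x)$ if there is no $x \in S$ with $F(x) < F(x^\ast)$. *)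

From HB Require Import structures.
From mathcomp Require Import all_boot all_order all_algebra.
From mathcomp Require Import all_classical all_reals all_analysis.
Set Implicit Arguments. Unset Strict Implicit. Unset Printing Implicit Defensive.
Import Order.TTheory GRing.Theory Num.Theory.
Import numFieldNormedType.Exports.
Local Open Scope classical_set_scope.
Local Open Scope ring_scope.

Definition enorm (R : realType) (n : nat) (v : 'rV[R]_n) : R :=
  Num.sqrt (\sum_(j < n) v ord0 j ^+ 2).

Definition convex_set_rV (R : realType) (n : nat) (S : set 'rV[R]_n) : Prop :=
  forall x y (t : R), S x -> S y -> 0 <= t <= 1 -> S (t *: x + (1 - t) *: y).

Definition convex_fun_on (R : realType) (n : nat) (S : set 'rV[R]_n)
    (f : 'rV[R]_n -> R) : Prop :=
  forall x y (t : R), S x -> S y -> 0 <= t <= 1 ->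
    f (t *: x + (1 - t) *: y) <= t * f x + (1 - t) * f y.

Definition weakly_pareto (R : realType) (n m : nat) (S : set 'rV[R]_n)
    (F : 'I_m -> 'rV[R]_n -> R) (xs : 'rV[R]_n) : Prop :=
  S xs /\ ~ (exists x, S x /\ forall i : 'I_m, F i x < F i xs).

(* min_i { F_i(x) - F_i(y) - l/2 ||x - y||^2 }, as an extended real
   (a genuine min when m > 0). *)
Definition phi_l (R : realType) (n m : nat) (F : 'I_m -> 'rV[R]_n -> R)
    (l : R) (x y : 'rV[R]_n) : \bar R :=
  \big[mine/+oo%E]_(i < m) (F i x - F i y - l / 2 * enorm (x - y) ^+ 2)%:E.

(* u_l(x) = max_{y in S} phi_l(x, y), taken as the supremum over S in the
   extended reals (it is attained, but the value is the same). *)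
Definition u_l (R : realType) (n m : nat) (S : set 'rV[R]_n)
    (F : 'I_m -> 'rV[R]_n -> R) (l : R) (x : 'rV[R]_n) : \bar R :=
  ereal_sup [set phi_l F l x y | y in S].

(** Nonnegativity: [y := x] makes every term of the minimum vanish.  If [x]
is weakly Pareto optimal, a positive value of the minimum at [y] would give
[F_i y < F_i x] for all [i], so [u_l x <= 0].  Conversely, if some [z] in [S]
satisfies [F z < F x] with uniform margin [d > 0], convexity yields, on the
segment point [y = x + t (z - x)], the bound
[F_i x - F_i y - l/2 |x - y|^2 >= t d - t^2 l/2 |x - z|^2], which is positive
for small [t > 0]; hence [u_l x > 0]. *)

From HB Require Import structures.
From mathcomp Require Import all_boot all_order all_algebra.
From mathcomp Require Import all_classical all_reals all_analysis.
From mathcomp Require Import ring lra.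
Import Order.TTheory GRing.Theory Num.Theory.
Import numFieldNormedType.Exports.
Local Open Scope classical_set_scope.
Local Open Scope ring_scope.

Lemma enorm_sqr {R : realType} {n : nat} (v : 'rV[R]_n) :
  enorm v ^+ 2 = \sum_(j < n) v ord0 j ^+ 2.
Proof. by rewrite /enorm sqr_sqrtr // sumr_ge0 // => j _; exact: sqr_ge0. Qed.

Lemma enorm_sqr_ge0 {R : realType} {n : nat} (v : 'rV[R]_n) :
  0 <= enorm v ^+ 2.
Proof. exact: sqr_ge0. Qed.

Lemma enormZ_sqr {R : realType} {n : nat} (t : R) (v : 'rV[R]_n) :
  enorm (t *: v) ^+ 2 = t ^+ 2 * enorm v ^+ 2.
Proof.
by rewrite !enorm_sqr mulr_sumr; apply: eq_bigr => j _; rewrite mxE exprMn.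
Qed.

Lemma uniform_margin {R : realDomainType} {I : finType} (f : I -> R) :
  (forall i, 0 < f i) -> exists2 d, 0 < d & forall i, d <= f i.
Proof.
move=> f_gt0; exists (\big[Num.min/1]_i f i).
  by apply: (big_ind (fun v => 0 < v)) => // a b a0 b0; rewrite lt_min a0 b0.
by move=> i; rewrite (bigD1 i) //= ge_min lexx.
Qed.

Lemma small_step_gain {R : realFieldType} {d a : R} :
  0 < d -> 0 <= a -> exists2 t, 0 < t <= 1 & 0 < t * d - t ^+ 2 * a.
Proof.
move=> d0 a0; have da0 : 0 < d + a by lra.
exists (d / (d + a)).
  by rewrite divr_gt0 //= ler_pdivrMr // mul1r lerDl.
have -> : d / (d + a) * d - (d / (d + a)) ^+ 2 * a = d ^+ 3 / (d + a) ^+ 2.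
  by field; rewrite gt_eqF.
by rewrite divr_gt0 // exprn_gt0.
Qed.

Lemma convex_fun_on_segment_gain {R : realType} {n : nat} {S : set 'rV[R]_n}
    {f : 'rV[R]_n -> R} {x z : 'rV[R]_n} (t : R) :
  convex_fun_on S f -> S x -> S z -> 0 <= t <= 1 ->
  t * (f x - f z) <= f x - f (t *: z + (1 - t) *: x).
Proof. move=> cvx Sx Sz t01; have := cvx z x t Sz Sx t01; lra. Qed.

Section Merit.
Context {R : realType} {n m : nat} {F : 'I_m -> 'rV[R]_n -> R} {l : R}.

Lemma phi_l_ge (x y : 'rV[R]_n) (c : R) :
  (forall i, c <= F i x - F i y - l / 2 * enorm (x - y) ^+ 2) ->
  (c%:E <= phi_l F l x y)%E.
Proof.
move=> c_le; apply: (big_ind (fun v => c%:E <= v)%E) => //.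
- exact: leey.
- by move=> a b ca cb; rewrite le_min ca cb.
- by move=> i _; rewrite lee_fin.
Qed.

Lemma phi_l_le (x y : 'rV[R]_n) (i : 'I_m) :
  (phi_l F l x y <= (F i x - F i y - l / 2 * enorm (x - y) ^+ 2)%:E)%E.
Proof. by rewrite /phi_l (bigD1 i) //= ge_min lexx. Qed.

Lemma phi_l_diag_ge0 (x : 'rV[R]_n) : (0 <= phi_l F l x x)%E.
Proof.
apply: phi_l_ge => i.
rewrite !subrr -(scale0r (0 : 'rV[R]_n)) enormZ_sqr expr0n.
by rewrite !mul0r mulr0 subr0.
Qed.

Lemma phi_l_gt0_lt (x y : 'rV[R]_n) : 0 <= l ->
  (0 < phi_l F l x y)%E -> forall i, F i y < F i x.
Proof.
move=> l0 phi_gt0 i; have := lt_le_trans phi_gt0 (phi_l_le x y i).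
rewrite lte_fin; have := enorm_sqr_ge0 (x - y); nra.
Qed.

Context {S : set 'rV[R]_n}.

Lemma phi_l_le_u_l (x : 'rV[R]_n) {y : 'rV[R]_n} :
  S y -> (phi_l F l x y <= u_l S F l x)%E.
Proof. by move=> Sy; apply: ereal_sup_ubound; exists y. Qed.

Lemma u_l_ge0 (x : 'rV[R]_n) : S x -> (0 <= u_l S F l x)%E.
Proof.
by move=> Sx; exact: le_trans (phi_l_diag_ge0 x) (phi_l_le_u_l x Sx).
Qed.

Lemma u_l_le0 (x : 'rV[R]_n) : 0 <= l ->
  ~ (exists y, S y /\ forall i, F i y < F i x) -> (u_l S F l x <= 0)%E.
Proof.
move=> l0 no_better; apply: ge_ereal_sup => _ [y Sy <-].
rewrite leNgt; apply/negP => phi_gt0; apply: no_better.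
by exists y; split => //; exact: phi_l_gt0_lt.
Qed.

Lemma u_l_gt0 {x z : 'rV[R]_n} : 0 <= l ->
  convex_set_rV S -> (forall i, convex_fun_on S (F i)) ->
  S x -> S z -> (forall i, F i z < F i x) -> (0 < u_l S F l x)%E.
Proof.
move=> l0 cS cF Sx Sz z_better.
have [d d0 d_le] : exists2 d, 0 < d & forall i, d <= F i x - F i z.
  by apply: uniform_margin => i; rewrite subr_gt0.
have a0 : 0 <= l / 2 * enorm (x - z) ^+ 2.
  by rewrite mulr_ge0 ?enorm_sqr_ge0 ?divr_ge0.
have [t /andP[t0 t1] gain] := small_step_gain d0 a0.
have t01 : 0 <= t <= 1 by rewrite (ltW t0) t1.
pose y := t *: z + (1 - t) *: x.
have phi_ge : ((t * d - t ^+ 2 * (l / 2 * enorm (x - z) ^+ 2))%:E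
               <= phi_l F l x y)%E.
  apply: phi_l_ge => i.
  have -> : x - y = t *: (x - z) by apply/rowP => j; rewrite !mxE; ring.
  have := convex_fun_on_segment_gain t (cF i) Sx Sz t01.
  have : t * d <= t * (F i x - F i z) by rewrite ler_wpM2l ?(ltW t0) ?d_le.
  rewrite enormZ_sqr; lra.
apply: lt_le_trans (le_trans phi_ge (phi_l_le_u_l x (cS _ _ _ Sz Sx t01))).
by rewrite lte_fin.
Qed.

End Merit.

Theorem theorem3p3 (R : realType) (n m : nat) (S : set 'rV[R]_n)
    (F : 'I_m -> 'rV[R]_n -> R) (l : R) :
  (0 < m)%N ->
  S !=set0 -> closed S -> convex_set_rV S ->
  (forall i, convex_fun_on S (F i)) ->
  (forall i, {within S, continuous (F i)}) ->
  0 < l ->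
  (forall x, S x -> (0 <= u_l S F l x)%E) /\
  (forall x, S x -> (weakly_pareto S F x <-> u_l S F l x = 0%E)).
Proof.
move=> _ _ _ cS cF _ /ltW l0; split=> [x|x Sx]; first exact: u_l_ge0.
split=> [[_ no_better] | u0].
- by apply: le_anti; rewrite u_l_le0 ?u_l_ge0.
- split=> // -[z [Sz z_better]].
  by have := u_l_gt0 l0 cS cF Sx Sz z_better; rewrite u0 ltxx.
Qed.
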